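(* Let $H = \{h_0 = 0_H, h_1, \dots, h_{t-1}\}$ be a finite abelian group with a fixed enumeration of its elements, and let $\boldsymbol{\lambda} = (\lambda_0,\dots,\lambda_{t-1})$ be a sequence of nonnegative integers. Suppose that for infinitely many primes $p$, every non-zero sum subset of type $\boldsymbol{\lambda}$ of $(\mathbb{Z}_p \times H) \setminus \{0_{\mathbb{Z}_p\times H}\}$ is sequenceable. Then every non-zero sum subset of type $\boldsymbol{\lambda}$ of $(\mathbb{Z} \times H) \setminus \{0_{\mathbb{Z}\times H}\}$ is sequenceable.
   Context: For a finite subset $S$ of an abelian group with $|S| = k$, an ordering $(x_1,\dots,x_k)$ of $S$ has partial sums $(y_0,\dots,y_k)$ with $y_0 = 0$, $y_i = x_1+\cdots+x_i$. It is a sequencing if the $y_i$ are pairwise distinct, and a rotational sequencing if they are pairwise distinct except that $y_k = y_0 = 0$; $S$ is sequenceable if it has one or the other. $S$ is non-zero sum if the sum of its elements is nonzero. For an abelian group $G$ and a finite abelian group $H = \{h_0=0_H,\dots,h_{t-1}\}$, the type of a finite subset $S \subseteq G \times H$ is $(\lambda_0,\dots,\lambda_{t-1})$ where $\lambda_i$ is the number of elements of $S$ whose $H$-coordinate equals $h_i$. *)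

From HB Require Import structures.
From mathcomp Require Import all_boot all_order all_algebra.
Set Implicit Arguments. Unset Strict Implicit. Unset Printing Implicit Defensive.
Import GRing.Theory.
Local Open Scope ring_scope.

(* A finite subset S of an abelian group G (zmodType) is represented by a
   duplicate-free list; an ordering of S is a list o with perm_eq o S. *)

Section Seq.
Variable G : zmodType.

Definition partial_sums (o : seq G) : seq G :=
  [seq \sum_(x <- take i o) x | i <- iota 0 (size o).+1].

Definition is_sequencing (o : seq G) : bool := uniq (partial_sums o).

(* the y_i are pairwise distinct except y_k = y_0 = 0 *)
Definition is_rotational_sequencing (o : seq G) : bool :=
  uniq (take (size o) (partial_sums o)) && (\sum_(x <- o) x == 0).

Definition sequenceable (S : seq G) : Prop :=
  exists o : seq G, perm_eq o S /\ (is_sequencing o || is_rotational_sequencing o).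

Definition nonzero_sum (S : seq G) : bool := \sum_(x <- S) x != 0.
End Seq.

Definition has_type (T : zmodType) (H : finZmodType) (lam : H -> nat)
  (S : seq (T * H)) : bool :=
  [forall h : H, count (fun x => x.2 == h) S == lam h].

From HB Require Import structures.
From mathcomp Require Import all_boot all_order all_algebra.
Set Implicit Arguments. Unset Strict Implicit. Unset Printing Implicit Defensive.
Import Order.TTheory GRing.Theory Num.Theory.
Local Open Scope ring_scope.

(* Let M be the sum of the |a| over (a, h) in S and p > 2M a prime. Reduction
   mod p is additive and, on elements of Z x H with |a| < p, has trivial
   kernel; so it maps S injectively onto a non-zero sum subset of Z_p x H of
   the same type avoiding 0. Being additive, it maps the partial sums of an
   ordering to those of its image, so a (rotational) sequencing of the image
   lifts to one of S. *)

Lemma perm_map_lift (T U : eqType) (f : T -> U) (s : seq T) (t : seq U) :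
  perm_eq t (map f s) -> exists2 s', perm_eq s' s & t = map f s'.
Proof.
case: s => [|x0 s]; first by move/perm_nilP ->; exists [::].
case/(perm_iotaP (f x0)) => Is; rewrite size_map => Is_perm ->.
exists (map (nth x0 (x0 :: s)) Is); first by apply/(perm_iotaP x0); exists Is.
rewrite -map_comp; apply/eq_in_map => i; rewrite (perm_mem Is_perm) mem_iota.
exact: nth_map.
Qed.

Section AdditiveImage.
Variables (G G' : zmodType) (f : {additive G -> G'}).

Lemma partial_sums_map (o : seq G) :
  partial_sums (map f o) = map f (partial_sums o).
Proof.
rewrite /partial_sums size_map -map_comp; apply: eq_map => i /=.
by rewrite -map_take big_map raddf_sum.
Qed.

Lemma is_sequencing_of_map (o : seq G) :
  is_sequencing (map f o) -> is_sequencing o.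
Proof. by rewrite /is_sequencing partial_sums_map => /map_uniq. Qed.

Lemma is_rotational_sequencing_of_map (o : seq G) :
  (f (\sum_(x <- o) x) = 0 -> \sum_(x <- o) x = 0) ->
  is_rotational_sequencing (map f o) -> is_rotational_sequencing o.
Proof.
move=> f_sum_eq0; rewrite /is_rotational_sequencing partial_sums_map size_map.
rewrite -map_take big_map -raddf_sum => /andP[/map_uniq -> /eqP/f_sum_eq0 ->].
by rewrite eqxx.
Qed.

Lemma sequenceable_of_map (S : seq G) :
  (f (\sum_(x <- S) x) = 0 -> \sum_(x <- S) x = 0) ->
  sequenceable (map f S) -> sequenceable S.
Proof.
move=> f_sum_eq0 [_ [/perm_map_lift[o o_perm ->] o_seq]].
exists o; split=> //; case/orP: o_seq => [/is_sequencing_of_map -> //|].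
move/is_rotational_sequencing_of_map ->; first by rewrite orbT.
by rewrite (perm_big _ o_perm).
Qed.

End AdditiveImage.

Lemma has_type_map (T T' : zmodType) (H : finZmodType) (lam : H -> nat)
    (f : T * H -> T' * H) (S : seq (T * H)) :
  (forall x, (f x).2 = x.2) -> has_type lam (map f S) = has_type lam S.
Proof.
move=> f2; apply: eq_forallb => h; rewrite count_map.
by under eq_count => x /= do rewrite f2.
Qed.

Lemma intr_Zp_eq0 (p : nat) (a : int) :
  (1 < p)%N -> `|a| < p%:R -> (a%:~R : 'Z_p) = 0 -> a = 0.
Proof.
move=> p_gt1 a_lt_p a0.
have absa0 : ((absz a)%:R : 'Z_p) = 0.
  by rewrite -[_%:R]/((absz a)%:Z%:~R) abszE normrEsg intrM a0 mulr0.
have := val_Zp_nat p_gt1 (absz a).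
rewrite absa0 modn_small; last by rewrite -ltz_nat abszE -natz.
by move/esym/eqP; rewrite absz_eq0 => /eqP.
Qed.

Section Reduction.
Variables (H : finZmodType) (p : nat).

Definition reduce (z : int * H) : 'Z_p * H := (z.1%:~R, z.2).

Fact reduce_is_zmod_morphism : zmod_morphism reduce.
Proof. by move=> x y; rewrite /reduce /= intrB. Qed.

HB.instance Definition _ :=
  GRing.isZmodMorphism.Build _ _ reduce reduce_is_zmod_morphism.

Hypothesis p_gt1 : (1 < p)%N.

Lemma reduce_eq0 (z : int * H) : `|z.1| < p%:R -> reduce z = 0 -> z = 0.
Proof. by case: z => a h /= a_lt_p [/(intr_Zp_eq0 p_gt1 a_lt_p) -> ->]. Qed.

Lemma reduce_inj (x y : int * H) :
  `|x.1 - y.1| < p%:R -> reduce x = reduce y -> x = y.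
Proof.
move=> lt_xy /eqP; rewrite -subr_eq0 -raddfB => /eqP/reduce_eq0 xy0.
by apply/eqP; rewrite -subr_eq0 xy0.
Qed.

End Reduction.

Lemma norm_fst_le_sum (R : numDomainType) (H : zmodType) (S : seq (R * H))
    (x : R * H) :
  x \in S -> `|x.1| <= \sum_(y <- S) `|y.1|.
Proof.
move=> xS; rewrite (big_rem x) //= lerDl.
by apply: sumr_ge0 => y _; apply: normr_ge0.
Qed.

Lemma norm_fst_sum_le (R : numDomainType) (H : zmodType) (S : seq (R * H)) :
  `|(\sum_(x <- S) x).1| <= \sum_(x <- S) `|x.1|.
Proof. by rewrite [X in `|X|]raddf_sum; apply: ler_norm_sum. Qed.

Theorem proposition4p2 (H : finZmodType) (lam : H -> nat) :
  (forall N : nat, exists p : nat, (N < p)%N /\ prime p /\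
     forall S : seq ('Z_p * H)%type,
       uniq S -> 0 \notin S -> nonzero_sum S -> has_type lam S ->
       sequenceable S) ->
  forall S : seq (int * H)%type,
    uniq S -> 0 \notin S -> nonzero_sum S -> has_type lam S ->
    sequenceable S.
Proof.
move=> hyp S S_uniq S_0 S_sum S_type.
set M := \sum_(x <- S) `|x.1|.
have M_ge0 : 0 <= M by apply: sumr_ge0 => x _; apply: normr_ge0.
have [p [lt2M_p [p_prime hp]]] := hyp (2 * absz M)%N.
have p_gt1 := prime_gt1 p_prime.
have ltMM_p : M + M < p%:R.
  by rewrite -[M]gez0_abs // -mulr2n -natz -mulrnA ltr_nat mulnC.
have ltM_p : M < p%:R by rewrite (le_lt_trans _ ltMM_p) ?lerDl.
have sum_lift : reduce p (\sum_(x <- S) x) = 0 -> \sum_(x <- S) x = 0.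
  exact/reduce_eq0/(le_lt_trans (norm_fst_sum_le S)).
apply: (sequenceable_of_map sum_lift); apply: hp.
- rewrite map_inj_in_uniq // => x y xS yS; apply: reduce_inj => //.
  rewrite (le_lt_trans (ler_normB _ _)) // (le_lt_trans _ ltMM_p) //.
  by rewrite lerD // norm_fst_le_sum.
- apply/mapP => -[x xS /esym/reduce_eq0 x0]; move: S_0.
  by rewrite -x0 ?xS // (le_lt_trans (norm_fst_le_sum xS)).
- rewrite /nonzero_sum big_map -raddf_sum.
  by apply: contra S_sum => /eqP/sum_lift ->.
- by rewrite has_type_map.
Qed.
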